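(* Let $\Gamma$ be a finite undirected simple graph with vertices $x_1,\dots,x_n$ and edge set $E$, let $G_\Gamma$ be the associated group, and let $y_1,\dots,y_N$ be the commutator generators of $G_\Gamma$ (notation as in the context). Let $i_0\in\{1,\dots,n\}$ and let $z_{i_0},t_1,\dots,t_N\in\mathbb{Z}$ with $z_{i_0}\neq 0$. Then \[h\Big(Z_{G_\Gamma}\Big(x_{i_0}^{z_{i_0}}\prod_{l=1}^N y_l^{t_l}\Big)\Big)=\deg(x_{i_0})+N+1,\] where $Z_{G_\Gamma}(g)$ denotes the centralizer of $g$ in $G_\Gamma$ and $h$ denotes the Hirsch number.
   Context: For a finite undirected simple graph $\Gamma$ with vertex set $\{x_1,\dots,x_n\}$ and edge set $E$, the group $G_\Gamma$ is defined by the presentation with generators $x_1,\dots,x_n$ and $y_{i,j}$ for each pair $i<j$ with $x_ix_j\notin E$, and relations $[x_j,x_i]=1$ if $x_ix_j\in E$; $[x_j,x_i]=y_{i,j}$ if $x_ix_j\notin E$ and $i<j$; and $[x_l,y_{i,j}]=1$ for all $l$ and all such $y_{i,j}$. (It is the 2-step nilpotent quotient of the right-angled Artin group of $\Gamma$.) Let $N$ be the number of pairs $i<j$ with $x_ix_j\notin E$, and enumerate the $y_{i,j}$ as $y_1,\dots,y_N$. Every element of $G_\Gamma$ is uniquely of the form $x_1^{z_1}\cdots x_n^{z_n}y_1^{t_1}\cdots y_N^{t_N}$ with $z_i,t_l\in\mathbb{Z}$. The Hirsch number $h(G)$ of a finitely generated nilpotent group $G$ is the number of infinite cyclic factors in any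 subnormal series of $G$ with cyclic factors. *)

From HB Require Import structures.
From mathcomp Require Import all_boot all_order all_algebra.
Set Implicit Arguments. Unset Strict Implicit. Unset Printing Implicit Defensive.
Import Order.TTheory GRing.Theory Num.Theory.
Local Open Scope ring_scope.

(* A finite simple graph on vertices 'I_n is a symmetric irreflexive
   relation e : rel 'I_n (vertex x_(i+1) of the paper is i : 'I_n). *)

(* Non-edges i < j: they index the commutator generators y_{i,j}. *)
Definition nonedge n (e : rel 'I_n) (p : 'I_n * 'I_n) : bool :=
  ((p.1 < p.2)%N && ~~ e p.1 p.2).

Definition Pairs n (e : rel 'I_n) := {p : 'I_n * 'I_n | nonedge e p}.

(* Normal form model of G_Gamma: (z, t) stands for
   x_1^{z_1} ... x_n^{z_n} * prod_{(i,j)} y_{i,j}^{t_{i,j}}. *)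
Definition GG n (e : rel 'I_n) := ({ffun 'I_n -> int} * {ffun Pairs e -> int})%type.

(* Convention: [a,b] = a^-1 b^-1 a b, so x_j x_i = x_i x_j y_{ij} for i<j
   non-adjacent; hence x_j^a x_i^b = x_i^b x_j^a y_{ij}^{ab}. *)
Definition cocyc n (e : rel 'I_n) (z z' : {ffun 'I_n -> int}) : {ffun Pairs e -> int} :=
  [ffun p => z (val p).2 * z' (val p).1].

Definition gmul n (e : rel 'I_n) (a b : GG e) : GG e :=
  ([ffun i => a.1 i + b.1 i], [ffun p => a.2 p + b.2 p + cocyc e a.1 b.1 p]).

Definition gone n (e : rel 'I_n) : GG e := ([ffun => 0], [ffun => 0]).

Definition ginv n (e : rel 'I_n) (a : GG e) : GG e :=
  ([ffun i => - a.1 i], [ffun p => - a.2 p + cocyc e a.1 a.1 p]).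

Definition gpow n (e : rel 'I_n) (a : GG e) (k : int) : GG e :=
  match k with
  | Posz m => iter m (gmul a) (gone e)
  | Negz m => ginv (iter m.+1 (gmul a) (gone e))
  end.

Definition gen_elt n (e : rel 'I_n) (i0 : 'I_n) (z0 : int) (t : {ffun Pairs e -> int}) : GG e :=
  ([ffun i => if i == i0 then z0 else 0], t).

Definition centralizer n (e : rel 'I_n) (g : GG e) : GG e -> Prop :=
  fun h => gmul h g = gmul g h.

Definition is_subgroup n (e : rel 'I_n) (H : GG e -> Prop) : Prop :=
  [/\ H (gone e), (forall a b, H a -> H b -> H (gmul a b)) & (forall a, H a -> H (ginv a))].

Definition normal_in n (e : rel 'I_n) (K H : GG e -> Prop) : Prop :=
  [/\ is_subgroup K, (forall a, K a -> H a) &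
      (forall h k, H h -> K k -> K (gmul (ginv h) (gmul k h)))].

Definition cyclic_quotient n (e : rel 'I_n) (K H : GG e -> Prop) : Prop :=
  exists2 g, H g & forall h, H h -> exists k : int, K (gmul h (gpow g (- k))).

Definition finite_quotient n (e : rel 'I_n) (K H : GG e -> Prop) : Prop :=
  exists s : seq (GG e), forall h, H h -> exists2 a, a \in s & K (gmul (ginv a) h).

Definition cyclic_series n (e : rel 'I_n) (H : GG e -> Prop) (m : nat)
    (s : nat -> GG e -> Prop) : Prop :=
  [/\ (forall a, s 0%N a <-> H a), (forall a, s m a <-> a = gone e),
      (forall i, (i < m)%N -> is_subgroup (s i)),
      (forall i, (i < m)%N -> normal_in (s i.+1) (s i)) &
      (forall i, (i < m)%N -> cyclic_quotient (s i.+1) (s i))].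

Definition num_infinite_factors n (e : rel 'I_n) (m : nat) (s : nat -> GG e -> Prop)
    (k : nat) : Prop :=
  exists2 I : {set 'I_m}, #|I| = k &
    forall i : 'I_m, i \in I <-> ~ finite_quotient (s (val i).+1) (s (val i)).

Definition hirsch_number n (e : rel 'I_n) (H : GG e -> Prop) (k : nat) : Prop :=
  (exists m s, @cyclic_series n e H m s) /\
  (forall m s, @cyclic_series n e H m s -> @num_infinite_factors n e m s k).

(* For a subgroup H of G_Gamma let hrank H be the sum of the rational ranks
   of its image in Z^n (the x-coordinates) and of its intersection with the
   central subgroup <y_1, ..., y_N> = Z^N.  If K is normal in H and H/K is
   cyclic, generated by g, then hrank H = hrank K when H/K is finite and
   hrank K + 1 otherwise: either no nonzero power of g has its x-part in the
   image of K, and only the first rank grows, or g^j0 k0^-1 lies in <y> for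
   some k0 in K, and this element raises the second rank exactly when no
   nonzero power of g lies in K.  Hence every cyclic series of H has exactly
   hrank H infinite factors.  The centralizer of x_i0^z0 y^t consists of the
   elements whose x-coordinates vanish outside i0 and its neighbours; killing
   these coordinates and then the y-coordinates one at a time is a cyclic
   series with deg(x_i0) + 1 + N factors, all infinite. *)

From HB Require Import structures.
From mathcomp Require Import all_boot all_order all_algebra.
From mathcomp Require Import zify ring.
From mathcomp Require Import boolp.
Set Implicit Arguments. Unset Strict Implicit. Unset Printing Implicit Defensive.
Import Order.TTheory GRing.Theory Num.Theory.
Local Open Scope ring_scope.

Section GroupLaws.
Variables (n : nat) (e : rel 'I_n).
Local Notation G := (GG e).
Implicit Types (a b : G) (t : {ffun Pairs e -> int}).

Lemma GG_ext a b : (forall i, a.1 i = b.1 i) -> (forall p, a.2 p = b.2 p) -> a = b.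
Proof.
by case: a b => [a1 a2] [b1 b2] /= h1 h2; congr pair; apply/ffunP => x; [exact: h1|exact: h2].
Qed.

Lemma gmul_x a b i : (gmul a b).1 i = a.1 i + b.1 i.
Proof. by rewrite ffunE. Qed.
Lemma gmul_y a b p : (gmul a b).2 p = a.2 p + b.2 p + a.1 (val p).2 * b.1 (val p).1.
Proof. by rewrite !ffunE. Qed.
Lemma ginv_x a i : (ginv a).1 i = - a.1 i.
Proof. by rewrite ffunE. Qed.
Lemma ginv_y a p : (ginv a).2 p = - a.2 p + a.1 (val p).2 * a.1 (val p).1.
Proof. by rewrite !ffunE. Qed.
Lemma gone_x i : (gone e).1 i = 0. Proof. by rewrite ffunE. Qed.
Lemma gone_y p : (gone e).2 p = 0. Proof. by rewrite ffunE. Qed.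

Definition ggE := (gmul_x, gmul_y, ginv_x, ginv_y, gone_x, gone_y).

Lemma gmulA a b c : gmul a (gmul b c) = gmul (gmul a b) c.
Proof. by apply: GG_ext => [i|p]; rewrite !ggE; ring. Qed.
Lemma gmul1g a : gmul (gone e) a = a.
Proof. by apply: GG_ext => [i|p]; rewrite !ggE; ring. Qed.
Lemma gmulg1 a : gmul a (gone e) = a.
Proof. by apply: GG_ext => [i|p]; rewrite !ggE; ring. Qed.
Lemma gmulVg a : gmul (ginv a) a = gone e.
Proof. by apply: GG_ext => [i|p]; rewrite !ggE; ring. Qed.
Lemma gmulgV a : gmul a (ginv a) = gone e.
Proof. by apply: GG_ext => [i|p]; rewrite !ggE; ring. Qed.
Lemma ginvM a b : ginv (gmul a b) = gmul (ginv b) (ginv a).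
Proof. by apply: GG_ext => [i|p]; rewrite !ggE; ring. Qed.
Lemma ginvK a : ginv (ginv a) = a.
Proof. by apply: GG_ext => [i|p]; rewrite !ggE; ring. Qed.

Definition tri (k : int) : int :=
  match k with Posz m => 'C(m, 2) | Negz m => 'C(m.+2, 2) end.

Lemma tri_mul2 k : 2 * tri k = k * (k - 1).
Proof.
have bin2_mul2 m : 2 * ('C(m, 2))%:Z = m%:Z * (m%:Z - 1).
  by elim: m => // m IHm; rewrite binS bin1 PoszD; lia.
by case: k => m /=; rewrite bin2_mul2 ?NegzE; lia.
Qed.

Lemma triD k l : tri (k + l) = tri k + tri l + k * l.
Proof. by have := tri_mul2 (k + l); have := tri_mul2 k; have := tri_mul2 l; lia. Qed.
Lemma triM k l : tri (k * l) = l * tri k + k * k * tri l.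
Proof. by have := tri_mul2 (k * l); have := tri_mul2 k; have := tri_mul2 l; nia. Qed.
Lemma triN k : tri (- k) = k * k - tri k.
Proof. by have := tri_mul2 (- k); have := tri_mul2 k; lia. Qed.

Lemma iter_gmul a m : iter m (gmul a) (gone e) =
  ([ffun i => m%:Z * a.1 i],
   [ffun p => m%:Z * a.2 p + tri m * (a.1 (val p).2 * a.1 (val p).1)]).
Proof.
elim: m => [|m IHm]; first by apply: GG_ext => [i|p]; rewrite !ggE !ffunE ?mul0r ?add0r.
rewrite iterS IHm; apply: GG_ext => [i|p]; rewrite !ggE !ffunE /= ?binS ?bin1 -addn1 !PoszD; ring.
Qed.

Lemma gpow_x a k i : (gpow a k).1 i = k * a.1 i.
Proof. by case: k => m; rewrite /gpow ?ginv_x iter_gmul ffunE // NegzE mulNr. Qed.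

Lemma gpow_y a k p : (gpow a k).2 p = k * a.2 p + tri k * (a.1 (val p).2 * a.1 (val p).1).
Proof.
case: k => m; rewrite /gpow ?ginv_y iter_gmul !ffunE //.
by have := tri_mul2 (Negz m); have := tri_mul2 m.+1; rewrite /= NegzE => ? ?; nia.
Qed.

Definition gpowE := (gpow_x, gpow_y).

Lemma gpowD a k l : gpow a (k + l) = gmul (gpow a k) (gpow a l).
Proof. by apply: GG_ext => [i|p]; rewrite ?ggE ?gpowE ?ggE ?triD; ring. Qed.
Lemma gpowM a k l : gpow (gpow a k) l = gpow a (k * l).
Proof. by apply: GG_ext => [i|p]; rewrite ?ggE ?gpowE ?ggE ?gpowE ?triM; ring. Qed.
Lemma gpowN a k : gpow a (- k) = ginv (gpow a k).
Proof. by apply: GG_ext => [i|p]; rewrite ?ggE ?gpowE ?ggE ?triN; ring. Qed.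
Lemma gpow0 a : gpow a 0 = gone e. Proof. by []. Qed.

Lemma gpow_xMz a k : (gpow a k).1 = a.1 *~ k.
Proof. by apply/ffunP => i; rewrite gpow_x ffunMzE mulrzz mulrC. Qed.

Definition ymon t : G := (0, t).

Lemma ymon_x t i : (ymon t).1 i = 0. Proof. by rewrite ffunE. Qed.
Lemma ymon_y t p : (ymon t).2 p = t p. Proof. by []. Qed.

Lemma ymon0 : ymon 0 = gone e.
Proof. by apply: GG_ext => [i|p]; rewrite /= !ffunE. Qed.
Lemma ymonD s t : ymon (s + t) = gmul (ymon s) (ymon t).
Proof. by apply: GG_ext => [i|p]; rewrite !ggE ?ymon_x ?ymon_y ?ffunE; ring. Qed.
Lemma ymonN t : ymon (- t) = ginv (ymon t).
Proof. by apply: GG_ext => [i|p]; rewrite !ggE ?ymon_x ?ymon_y ?ffunE; ring. Qed.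
Lemma ymonC t a : gmul (ymon t) a = gmul a (ymon t).
Proof. by apply: GG_ext => [i|p]; rewrite !ggE ?ymon_x; ring. Qed.
Lemma gpow_ymon t k : gpow (ymon t) k = ymon (t *~ k).
Proof. by apply: GG_ext => [i|p]; rewrite !gpowE ?ymon_x ?ymon_y ?ffunMzE ?mulrzz; ring. Qed.
Lemma gpowMl_ymon t a k : gpow (gmul (ymon t) a) k = gmul (ymon (t *~ k)) (gpow a k).
Proof.
by apply: GG_ext => [i|p]; rewrite !(ggE, gpowE) ?ymon_x ?ymon_y ?ffunMzE ?mulrzz; ring.
Qed.
Lemma gmul_ymon_gpowK t s a k :
  gmul (gmul (ymon t) (gpow a (- k))) (gmul (ymon s) (gpow a k)) = ymon (t + s).
Proof.
by rewrite (ymonC s) gmulA -(gmulA (ymon t)) -gpowD addNr gpow0 gmulg1 -ymonD.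
Qed.

Lemma ymon_eta a : (forall i, a.1 i = 0) -> a = ymon a.2.
Proof. by move=> a1; apply: GG_ext => [i|p]; rewrite ?ymon_x. Qed.

Section Subgroup.
Variables (H : G -> Prop) (sH : is_subgroup H).

Lemma subgroup1 : H (gone e). Proof. by case: sH. Qed.
Lemma subgroupM a b : H a -> H b -> H (gmul a b). Proof. by case: sH => _ hM _; apply: hM. Qed.
Lemma subgroupV a : H a -> H (ginv a). Proof. by case: sH => _ _ hV; apply: hV. Qed.
Lemma subgroupX a k : H a -> H (gpow a k).
Proof.
move=> Ha; have Hiter m : H (iter m (gmul a) (gone e)).
  by elim: m => [|m IHm]; [exact: subgroup1 | exact: subgroupM].
by case: k => m; [exact: Hiter | exact/subgroupV/Hiter].
Qed.

End Subgroup.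

End GroupLaws.

Lemma dimv_add_line (K : fieldType) (vT : vectType K) (U : {vspace vT}) v :
  \dim (U + <[v]>) = (\dim U + (v \notin U))%N.
Proof.
have [vU|vNU] /= := boolP (v \in U).
  by rewrite memvE in vU; rewrite (addv_idPl vU) addn0.
have v_neq0 : v != 0 by apply: contraNneq vNU => ->; rewrite mem0v.
rewrite dimv_disjoint_sum ?dim_vline ?v_neq0 //.
apply/eqP; rewrite -subv0; apply/subvP => w /memv_capP [wU /vlineP [k defw]].
rewrite memv0; apply/eqP; move: wU; rewrite defw.
have [->|k_neq0 kvU] := eqVneq k 0; first by rewrite scale0r.
by case/negP: vNU; rewrite -(scalerK k_neq0 v) memvZ.
Qed.

Section RationalSpan.
Variable T : finType.
Local Notation F := {ffun T -> int}.
Local Notation V := 'rV[rat]_#|T|.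
Implicit Types (f g : F) (S : F -> Prop).

Definition ratvec f : V := \row_i (f (enum_val i))%:~R.

Lemma ratvec0 : ratvec 0 = 0.
Proof. by apply/rowP => i; rewrite !mxE ffunE. Qed.
Lemma ratvecD f g : ratvec (f + g) = ratvec f + ratvec g.
Proof. by apply/rowP => i; rewrite !mxE ffunE intrD. Qed.
Lemma ratvecMz f k : ratvec (f *~ k) = k%:~R *: ratvec f.
Proof. by apply/rowP => i; rewrite !mxE ffunMzE mulrzz intrM mulrC. Qed.
Lemma ratvec_inj : injective ratvec.
Proof.
move=> f g /rowP fg; apply/ffunP => x.
by have := fg (enum_rank x); rewrite !mxE enum_rankK => /intr_inj.
Qed.

Definition zsubmod S :=
  [/\ S 0, forall f g, S f -> S g -> S (f + g) & forall f, S f -> S (- f)].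

Lemma zsubmodMz S f k : zsubmod S -> S f -> S (f *~ k).
Proof.
case=> S0 SD SN Sf; have Snat m : S (f *+ m).
  by elim: m => [|m IHm]; rewrite ?mulr0n ?mulrS //; apply: SD.
by case: k => m; rewrite ?NegzE ?mulrNz -pmulrn; [|apply: SN]; apply: Snat.
Qed.

Lemma exists_spanning_seq S : exists X : seq F,
  (forall f, f \in X -> S f) /\ forall f, S f -> ratvec f \in <<map ratvec X>>%VS.
Proof.
pose span_of X := <<map ratvec X>>%VS.
have extend X f : ratvec f \notin span_of X ->
    (\dim (span_of X) < \dim (span_of (f :: X)) <= \dim {: V})%N.
  by move=> fNX; rewrite dimvS ?subvf // andbT /span_of /= span_cons addvC dimv_add_line fNX addn1.
suff grow k X : (\dim {: V} - \dim (span_of X) <= k)%N -> (forall f, f \in X -> S f) ->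
    exists Y, (forall f, f \in Y -> S f) /\ forall f, S f -> ratvec f \in span_of Y.
  exact: (grow _ [::] (leq_subr _ _)).
elim: k X => [|k IHk] X leVk XS;
  have [[f [Sf /extend /andP [ltX leV]]]|spanX] :=
    pselect (exists f, S f /\ ratvec f \notin span_of X);
  try by exists X; split=> // f Sf; apply/negPn/negP => fNX; apply: spanX; exists f.
  by move: leVk ltX leV; lia.
apply: (IHk (f :: X)); first by move: leVk ltX leV; lia.
by move=> g; rewrite inE => /orP [/eqP ->|/XS].
Qed.

(* In finite dimension the span of the image of S is spanned by finitely many
   of its vectors; [spanning_seq S] is such a finite subsequence of S. *)
Definition spanning_seq S : seq F := proj1_sig (cid (exists_spanning_seq S)).

Definition qspan S : {vspace V} := <<map ratvec (spanning_seq S)>>%VS.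

Lemma spanning_seqP S : (forall f, f \in spanning_seq S -> S f) /\
  forall f, S f -> ratvec f \in qspan S.
Proof. exact: proj2_sig (cid (exists_spanning_seq S)). Qed.

Lemma spanning_seq_sub S f : f \in spanning_seq S -> S f.
Proof. by case: (spanning_seqP S) => XS _; apply: XS. Qed.

Lemma qspan_mem S f : S f -> ratvec f \in qspan S.
Proof. by case: (spanning_seqP S) => _; apply. Qed.

Lemma qspan_min S (U : {vspace V}) : (forall f, S f -> ratvec f \in U) -> (qspan S <= U)%VS.
Proof.
by move=> SU; apply/span_subvP => _ /mapP [f /spanning_seq_sub Sf ->]; apply: SU.
Qed.

Lemma qspanS S S' : (forall f, S f -> S' f) -> (qspan S <= qspan S')%VS.
Proof. by move=> SS'; apply: qspan_min => f /SS' /qspan_mem. Qed.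

Lemma qspan_eq0 S : (forall f, S f -> f = 0) -> qspan S = 0%VS.
Proof.
by move=> S0; apply/eqP; rewrite -subv0; apply: qspan_min => f /S0 ->; rewrite ratvec0 mem0v.
Qed.

Lemma eq_qspan S S' : (forall f, S f <-> S' f) -> qspan S = qspan S'.
Proof. by move=> eqS; apply/subv_anti/andP; split; apply: qspanS => f /eqS. Qed.

Lemma mem_qspan_Mz S f d : d != 0 -> S (f *~ d) -> ratvec f \in qspan S.
Proof.
move=> d_neq0 /qspan_mem; rewrite ratvecMz => dfS.
have d_neq0' : (d%:~R : rat) != 0 by rewrite intr_eq0.
by rewrite -(scalerK d_neq0' (ratvec f)) memvZ.
Qed.

Lemma qspan_Mz S f : zsubmod S -> ratvec f \in qspan S -> exists2 d, d != 0 & S (f *~ d).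
Proof.
move=> zS; have [S0 SD _] := zS.
suff clear_denominators X w : (forall g, g \in X -> S g) -> w \in <<map ratvec X>>%VS ->
    exists2 d : int, d != 0 & exists2 s, S s & d%:~R *: w = ratvec s.
  move=> /(clear_denominators _ _ (@spanning_seq_sub S)) [d d_neq0 [s Ss]].
  by rewrite -ratvecMz => /ratvec_inj defs; exists d; rewrite ?defs.
elim: X w => [|x X IHX] w XS /=.
  rewrite span_nil memv0 => /eqP ->; exists 1 => //; exists 0 => //.
  by rewrite scaler0 ratvec0.
rewrite span_cons => /memv_addP [_ /vlineP [q ->] [w' /IHX w'X ->]].
have [|d' d'_neq0 [s' Ss' defs']] := w'X; first by move=> g gX; apply: XS; rewrite inE gX orbT.
exists (d' * denq q); first by rewrite mulf_neq0 ?denq_neq0.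
exists (x *~ (d' * numq q) + s' *~ denq q).
  by apply: SD; apply: zsubmodMz => //; apply: XS; rewrite inE eqxx.
rewrite ratvecD !ratvecMz -defs' scalerDr !scalerA !intrM numqE.
by congr (_ *: _ + _ *: _); ring.
Qed.

Lemma qspan_add_line S S' v : zsubmod S ->
    (forall f, S' f <-> exists s k, S s /\ f = s + v *~ k) ->
  qspan S' = (qspan S + <[ratvec v]>)%VS.
Proof.
move=> [S0 _ _] defS'; apply/subv_anti/andP; split.
  apply: qspan_min => f /defS' [s [k [Ss ->]]].
  by rewrite ratvecD ratvecMz memv_add ?qspan_mem ?memvZ ?memv_line.
rewrite subv_add -memvE; apply/andP; split.
  by apply: qspanS => f Sf; apply/defS'; exists f, 0; rewrite mulr0z addr0.
by apply: qspan_mem; apply/defS'; exists 0, 1; rewrite mulr1z add0r.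
Qed.

End RationalSpan.

Section HirschRank.
Variables (n : nat) (e : rel 'I_n).
Local Notation G := (GG e).
Implicit Types (H K : G -> Prop) (a g : G).

Definition xproj H : {ffun 'I_n -> int} -> Prop := fun z => exists t, H (z, t).
Definition ycore H : {ffun Pairs e -> int} -> Prop := fun t => H (ymon t).

Definition hrank H : nat := (\dim (qspan (xproj H)) + \dim (qspan (ycore H)))%N.

Lemma xproj_mem H a : H a -> xproj H a.1.
Proof. by case: a => z t Ha; exists t. Qed.

Lemma xproj_zsubmod H : is_subgroup H -> zsubmod (xproj H).
Proof.
move=> sH; split.
- by exists 0; rewrite -[(0, 0)]ymon0; apply: subgroup1.
- move=> z z' [t Ht] [t' Ht']; have /xproj_mem := subgroupM sH Ht Ht'.
  by congr xproj; apply/ffunP => i; rewrite gmul_x ffunE.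
- move=> z [t Ht]; have /xproj_mem := subgroupV sH Ht.
  by congr xproj; apply/ffunP => i; rewrite ginv_x ffunE.
Qed.

Lemma ycore_zsubmod H : is_subgroup H -> zsubmod (ycore H).
Proof.
move=> sH; split; rewrite /ycore.
- by rewrite ymon0; apply: subgroup1.
- by move=> t t' Ht Ht'; rewrite ymonD; apply: subgroupM.
- by move=> t Ht; rewrite ymonN; apply: subgroupV.
Qed.

Lemma eq_hrank H H' : (forall a, H a <-> H' a) -> hrank H = hrank H'.
Proof.
move=> eqH; rewrite /hrank (@eq_qspan _ (xproj H) (xproj H')).
  by rewrite (@eq_qspan _ (ycore H) (ycore H')) // => t; apply: eqH.
by move=> z; split=> [] [t /eqH]; exists t.
Qed.

Lemma hrank_trivial H : (forall a, H a <-> a = gone e) -> hrank H = 0%N.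
Proof.
move=> H1; rewrite /hrank !qspan_eq0 ?dimv0 //.
  by move=> t /H1; rewrite -ymon0 => -[].
by move=> z [t /H1]; rewrite -ymon0 => -[].
Qed.

Lemma finite_quotient_torsion H K g : is_subgroup H -> is_subgroup K -> H g ->
  finite_quotient K H -> exists2 j, j != 0 & K (gpow g j).
Proof.
move=> sH sK Hg [s covH].
have /fin_all_exists [f coset_f] (i : 'I_(size s).+1) :
    exists k : 'I_(size s), K (gmul (ginv (nth (gone e) s k)) (gpow g i)).
  have [a sa Ka] := covH _ (subgroupX sH i Hg).
  by exists (Ordinal (etrans (index_mem a s) sa)); rewrite /= nth_index.
have /dinjectivePn [i _ [j]] : ~~ injectiveb f.
  by apply/injectiveP => /leq_card; rewrite !card_ord ltnn.
rewrite inE /= => /andP [j_neq_i _] fij.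
exists (- (i : nat)%:Z + (j : nat)%:Z).
  by rewrite addrC subr_eq0 eqz_nat; apply: contra j_neq_i => /eqP /val_inj ->.
have := subgroupM sK (subgroupV sK (coset_f i)) (coset_f j).
by rewrite fij ginvM ginvK -gmulA (gmulA (nth _ _ _)) gmulgV gmul1g -gpowN -gpowD.
Qed.

Lemma torsion_finite_quotient H K g : is_subgroup H -> normal_in K H -> H g ->
    (forall h, H h -> exists k, K (gmul h (gpow g (- k)))) ->
  (exists2 j, j != 0 & K (gpow g j)) -> finite_quotient K H.
Proof.
move=> sH [sK _ nK] Hg gen_g [j j_neq0 Kgj].
exists [seq gpow g r%:Z | r <- iota 0 `|j|] => h /gen_g [k Kk].
have r_ge0 : 0 <= (k %% j)%Z by apply: modz_ge0.
exists (gpow g (k %% j)%Z).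
  apply/mapP; exists `|(k %% j)%Z|%N; last by rewrite gez0_abs.
  by rewrite mem_iota add0n -ltz_nat gez0_abs // ltz_mod.
have def_k : k = (k %% j)%Z + (k %/ j)%Z * j by rewrite addrC -divz_eq.
suff -> : gmul (ginv (gpow g (k %% j)%Z)) h = gmul (gmul (ginv (gpow g (k %% j)%Z))
     (gmul (gmul h (gpow g (- k))) (gpow g (k %% j)%Z))) (gpow g ((k %/ j)%Z * j)).
  apply: (subgroupM sK); first by apply: nK => //; apply: subgroupX.
  by rewrite mulrC -gpowM; apply: subgroupX.
by rewrite -!gmulA -!gpowD -def_k addNr gpow0 gmulg1.
Qed.

Section CyclicStep.
Variables (H K : G -> Prop) (g : G).
Hypotheses (sH : is_subgroup H) (nKH : normal_in K H) (Hg : H g)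
  (gen_g : forall h, H h -> exists k, K (gmul h (gpow g (- k)))).

Let sK : is_subgroup K. Proof. by case: nKH. Qed.
Let sKH a : K a -> H a. Proof. by case: nKH => _ KH _; apply: KH. Qed.

Let torsion := exists2 j, j != 0 & K (gpow g j).

Let finite_quotientP : finite_quotient K H <-> torsion.
Proof. by split; [exact: finite_quotient_torsion | exact: torsion_finite_quotient]. Qed.

Lemma xproj_cyclic z : xproj H z <-> exists s k, xproj K s /\ z = s + g.1 *~ k.
Proof.
split=> [[t /gen_g [k Kk]] | [s [k [[t Kst] ->]]]].
  exists (gmul (z, t) (gpow g (- k))).1, k; split; first exact: xproj_mem.
  by apply/ffunP => i; rewrite ffunE gmul_x gpow_x ffunMzE mulrzz /=; ring.
have /xproj_mem : H (gmul (s, t) (gpow g k)).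
  by apply: (subgroupM sH); [apply: sKH | apply: subgroupX].
by congr xproj; apply/ffunP => i; rewrite gmul_x gpow_x ffunE ffunMzE mulrzz mulrC.
Qed.

Let qspan_xproj : qspan (xproj H) = (qspan (xproj K) + <[ratvec g.1]>)%VS.
Proof. exact/qspan_add_line/xproj_cyclic/xproj_zsubmod. Qed.

Section FreeCase.
Hypothesis gxNK : ratvec g.1 \notin qspan (xproj K).

Let xprojK_Mz j : j != 0 -> ~ xproj K (g.1 *~ j).
Proof. by move=> j_neq0 /(mem_qspan_Mz j_neq0); apply/negP. Qed.

Lemma not_torsion_free : ~ torsion.
Proof. by case=> j j_neq0 /xproj_mem; rewrite gpow_xMz; apply: xprojK_Mz. Qed.

Lemma hrank_free : hrank H = (hrank K).+1.
Proof.
have ycoreHK t : ycore H t -> ycore K t.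
  move=> /gen_g [k]; have [->|k_neq0 /xproj_mem] := eqVneq k 0; first by rewrite gmulg1.
  suff -> : (gmul (ymon t) (gpow g (- k))).1 = g.1 *~ (- k).
    by move/xprojK_Mz; rewrite oppr_eq0 => /(_ k_neq0).
  by apply/ffunP => i; rewrite gmul_x ymon_x add0r gpow_xMz.
rewrite /hrank qspan_xproj dimv_add_line gxNK addn1.
by rewrite (@eq_qspan _ (ycore H) (ycore K)) // => t; split=> [/ycoreHK|/sKH].
Qed.

End FreeCase.

Section TorsionCase.
Variables (j0 : int) (t0 : {ffun Pairs e -> int}).
Hypotheses (j0_neq0 : j0 != 0) (Kk0 : K (g.1 *~ j0, t0)).
Local Notation k0 := ((g.1 *~ j0, t0) : G).

Definition torsion_defect := (gmul (gpow g j0) (ginv k0)).2.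
Local Notation c := torsion_defect.

Let ymon_defect : ymon c = gmul (gpow g j0) (ginv k0).
Proof. by apply/esym/ymon_eta => i; rewrite gmul_x ginv_x gpow_xMz ffunMzE subrr. Qed.

Let gpow_k0 j : gpow k0 j = gmul (ymon (c *~ - j)) (gpow g (j0 * j)).
Proof.
have -> : k0 = gmul (ginv (ymon c)) (gpow g j0).
  by rewrite ymon_defect ginvM ginvK -gmulA gmulVg gmulg1.
by rewrite -ymonN gpowMl_ymon gpowM mulNrz mulrNz.
Qed.

Lemma qspan_ycore_torsion : qspan (ycore H) = (qspan (ycore K) + <[ratvec c]>)%VS.
Proof.
pose S t := exists s k, ycore K s /\ t = s + c *~ k.
have ycoreHS t : ycore H t -> S (t *~ j0).
  move=> /gen_g [k Kk]; exists (t *~ j0 + c *~ - k), k; split; last by rewrite mulrNz addrNK.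
  have := subgroupM sK (subgroupX sK j0 Kk) (subgroupX sK k Kk0).
  by rewrite gpowMl_ymon gpowM gpow_k0 mulNr (mulrC j0) gmul_ymon_gpowK.
have SycoreH t : S t -> ycore H t.
  have Hc : H (ymon c).
    by rewrite ymon_defect; apply: (subgroupM sH); [apply: subgroupX | apply/(subgroupV sH)/sKH].
  case=> s [k [Ks ->]]; rewrite /ycore ymonD -gpow_ymon.
  by apply: (subgroupM sH); [apply: sKH | apply: subgroupX].
rewrite -(@qspan_add_line _ _ S _ (ycore_zsubmod sK)) //.
apply/subv_anti/andP; split; last exact: qspanS.
by apply: qspan_min => t /ycoreHS /(mem_qspan_Mz j0_neq0).
Qed.

Lemma torsion_defectP : torsion <-> ratvec c \in qspan (ycore K).
Proof.
split=> [[j j_neq0 Kgj] | /(qspan_Mz (ycore_zsubmod sK)) [d d_neq0 Kcd]].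
  apply: (@mem_qspan_Mz _ _ _ (- j)); rewrite ?oppr_eq0 // /ycore.
  have -> : ymon (c *~ - j) = gmul (gpow k0 j) (ginv (gpow g (j0 * j))).
    by rewrite gpow_k0 -gmulA gmulgV gmulg1.
  apply: (subgroupM sK); first exact: subgroupX.
  by rewrite mulrC -gpowM; apply: (subgroupV sK); apply: subgroupX.
exists (j0 * - d); first by rewrite mulf_neq0 ?oppr_eq0.
have -> : gpow g (j0 * - d) = gmul (ginv (ymon (c *~ d))) (gpow k0 (- d)).
  by rewrite gpow_k0 opprK gmulA gmulVg gmul1g.
by apply: (subgroupM sK); [apply: subgroupV | apply: subgroupX].
Qed.

Lemma hrank_torsion : hrank H = (hrank K + (ratvec c \notin qspan (ycore K)))%N.
Proof.
have gxK : ratvec g.1 \in qspan (xproj K) by apply: (mem_qspan_Mz j0_neq0); exists t0.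
by rewrite /hrank qspan_xproj qspan_ycore_torsion !dimv_add_line gxK addn0 addnA.
Qed.

End TorsionCase.

Lemma hrank_step_finite : finite_quotient K H -> hrank H = hrank K.
Proof.
move/finite_quotientP => tor; have [gxK|gxNK] := boolP (ratvec g.1 \in qspan (xproj K)).
  have [j0 j0_neq0 [t0 Kk0]] := qspan_Mz (xproj_zsubmod sK) gxK.
  by rewrite (hrank_torsion j0_neq0 Kk0) (iffLR (torsion_defectP j0_neq0 Kk0) tor) addn0.
by case: (not_torsion_free gxNK).
Qed.

Lemma hrank_step_infinite : ~ finite_quotient K H -> hrank H = (hrank K).+1.
Proof.
move/(contra_not (iffRL finite_quotientP)) => ntor.
have [gxK|gxNK] := boolP (ratvec g.1 \in qspan (xproj K)); last exact: hrank_free.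
have [j0 j0_neq0 [t0 Kk0]] := qspan_Mz (xproj_zsubmod sK) gxK.
rewrite (hrank_torsion j0_neq0 Kk0).
by case: (boolP (ratvec _ \in _)) => [/(torsion_defectP j0_neq0 Kk0) /ntor [] | _]; rewrite addn1.
Qed.

End CyclicStep.

End HirschRank.

Lemma hrank_cyclic_series n (e : rel 'I_n) (H : GG e -> Prop) m s :
  cyclic_series H m s -> num_infinite_factors m s (hrank H).
Proof.
case=> s0 sm sub nrm cyc.
pose infinite_factor i := `[< ~ finite_quotient (s i.+1) (s i) >].
have hrank_s i : (i < m)%N -> hrank (s i) = (hrank (s i.+1) + infinite_factor i)%N.
  move=> lt_im; have [g Hg gen_g] := cyc i lt_im.
  have [sH nKH] := (sub i lt_im, nrm i lt_im).
  rewrite /infinite_factor; have [fin|inf] := pselect (finite_quotient (s i.+1) (s i)).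
    by rewrite asboolF ?addn0; [exact: hrank_step_finite sH nKH Hg gen_g fin | move/(_ fin)].
  by rewrite asboolT ?addn1 //; exact: hrank_step_infinite sH nKH Hg gen_g inf.
have telescope i : (i <= m)%N ->
    hrank (s 0%N) = (hrank (s i) + \sum_(j < i) infinite_factor j)%N.
  elim: i => [|i IHi] le_im; first by rewrite big_ord0 addn0.
  rewrite IHi ?(ltnW le_im) // hrank_s // big_ord_recr /=; lia.
exists [set i : 'I_m | infinite_factor i]; last by move=> i; rewrite inE; split=> /asboolP.
rewrite -(eq_hrank s0) (telescope m) // (hrank_trivial sm) add0n -sum1_card big_mkcond /=.
by apply: eq_bigr => i _; rewrite inE; case: (infinite_factor i).
Qed.

Section SupportSeries.
Variables (n : nat) (e : rel 'I_n) (D : {set 'I_n}).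
Local Notation G := (GG e).
Local Notation N := #|{: Pairs e}|.

Definition supported (h : G) : Prop := forall j, j \notin D -> h.1 j = 0.

Definition infinite_cyclic_step (K H : G -> Prop) (g : G) : Prop :=
  [/\ H g, forall h, H h -> exists k, K (gmul h (gpow g (- k)))
     & forall j, j != 0 -> ~ K (gpow g j)].

(* Order the coordinates as the x_j, j in D (in the order of enum D), then
   the y_p (in the order of enum); the i-th term of the series consists of
   the elements whose first i coordinates vanish. *)
Definition support_series (i : nat) (h : G) : Prop :=
  (forall j, h.1 j != 0 -> (j \in D) && (i <= index j (enum D))%N) /\
  (forall p, h.2 p != 0 -> (i <= #|D| + enum_rank p)%N).

Lemma support_series_x0 i h : (#|D| <= i)%N -> support_series i h -> forall j, h.1 j = 0.
Proof.
move=> Di [h_x _] j; apply/eqP/negPn/negP => /h_x /andP [jD le_ij].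
by have := leq_trans Di le_ij; rewrite leqNgt cardE index_mem mem_enum jD.
Qed.

Let neq0_add (x y : int) : x + y != 0 -> (x != 0) || (y != 0).
Proof. by apply: contraR; rewrite negb_or => /andP [/negPn/eqP -> /negPn/eqP ->]. Qed.

Lemma support_series_subgroup i : is_subgroup (support_series i).
Proof.
have y_free i' p : (i' <= #|D|)%N -> (i' <= #|D| + enum_rank p)%N.
  by move=> iD; apply: leq_trans iD (leq_addr _ _).
split.
- by split=> [j|p]; rewrite ?gone_x ?gone_y eqxx.
- move=> a b [a_x a_y] [b_x b_y]; split=> [j|p].
    by rewrite gmul_x => /neq0_add /orP [/a_x|/b_x].
  have [iD _|Di] := leqP i #|D|; first exact: y_free.
  rewrite gmul_y (support_series_x0 (ltnW Di) (conj a_x a_y)) mul0r addr0.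
  by move=> /neq0_add /orP [/a_y|/b_y].
- move=> a [a_x a_y]; split=> [j|p]; first by rewrite ginv_x oppr_eq0 => /a_x.
  have [iD _|Di] := leqP i #|D|; first exact: y_free.
  by rewrite ginv_y (support_series_x0 (ltnW Di) (conj a_x a_y)) mul0r addr0 oppr_eq0 => /a_y.
Qed.

Lemma support_series_normal i : normal_in (support_series i.+1) (support_series i).
Proof.
split; first exact: support_series_subgroup.
  by move=> a [a_x a_y]; split=> [j /a_x /andP [-> /ltnW]|p /a_y /ltnW].
move=> h k h_i k_i1; have [k_x k_y] := k_i1; split=> [j|p].
  by rewrite !gmul_x ginv_x addrC addrK; apply: k_x.
have [iD _|Di] := leqP i.+1 #|D|; first by apply: leq_trans iD (leq_addr _ _).
rewrite !gmul_y ginv_y !gmul_x ginv_x !(support_series_x0 (ltnW Di) k_i1).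
by rewrite !(support_series_x0 Di h_i) !(mulr0, addr0) addrCA addNr addr0 => /k_y.
Qed.

Lemma support_series0 h : support_series 0 h <-> supported h.
Proof.
split=> [[h_x _] j jND | h_D]; first by apply/eqP/negPn/negP => /h_x; rewrite (negbTE jND).
split=> // j; apply: contraR; rewrite leq0n andbT => jND.
by rewrite h_D.
Qed.

Lemma support_series_last h : support_series (#|D| + N) h <-> h = gone e.
Proof.
split=> [h_last|->]; last by split=> [j|p]; rewrite ?gone_x ?gone_y eqxx.
have [_ h_y] := h_last; apply: GG_ext => [j|p].
  by rewrite gone_x (support_series_x0 (leq_addr _ _) h_last).
by rewrite gone_y; apply/eqP/negPn/negP => /h_y; rewrite leq_add2l leqNgt ltn_ord.
Qed.

Lemma support_series_step_x i : (i < #|D|)%N ->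
  exists g, infinite_cyclic_step (support_series i.+1) (support_series i) g.
Proof.
move=> lt_iD; pose j := enum_val (Ordinal lt_iD).
have jD : j \in D by apply: enum_valP.
have ij : index j (enum D) = i.
  by rewrite /j (enum_val_nth j) index_uniq ?enum_uniq // -cardE.
pose xj : G := ([ffun x => (x == j)%:Z], 0).
have xj_x x : xj.1 x = (x == j)%:Z by rewrite ffunE.
exists xj; split.
- split=> [x|p]; last by rewrite ffunE eqxx.
  by rewrite xj_x; case: (eqVneq x j) => [->|//]; rewrite jD ij leqnn.
- move=> h [h_x _]; exists (h.1 j); split=> [x|p _]; last exact: leq_trans lt_iD (leq_addr _ _).
  rewrite gmul_x gpow_x xj_x; have [->|x_neq_j] := eqVneq x j; first by rewrite mulr1 subrr eqxx.
  rewrite mulr0 addr0 => /h_x /andP [xD le_ix]; rewrite xD ltn_neqAle le_ix andbT.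
  by apply: contra x_neq_j => /eqP ix; rewrite /j (enum_val_nth x) /= ix nth_index ?mem_enum.
- move=> k k_neq0 [xj_k _]; have := xj_k j.
  by rewrite gpow_x xj_x eqxx mulr1 ij ltnn andbF => /(_ k_neq0).
Qed.

Lemma support_series_step_y i : (#|D| <= i < #|D| + N)%N ->
  exists g, infinite_cyclic_step (support_series i.+1) (support_series i) g.
Proof.
case/andP => Di lt_iN; have lt_i'N : (i - #|D| < N)%N by rewrite ltn_subLR.
pose q := enum_val (Ordinal lt_i'N).
have rank_q : enum_rank q = (i - #|D|)%N :> nat by rewrite /q enum_valK.
pose yq : G := ymon [ffun p => (p == q)%:Z].
have yq_y p : yq.2 p = (p == q)%:Z by rewrite ffunE.
exists yq; split.
- split=> [x|p]; first by rewrite ymon_x eqxx.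
  by rewrite yq_y; case: (eqVneq p q) => [->|//] _; rewrite rank_q subnKC.
- move=> h h_i; have h_x := support_series_x0 Di h_i.
  exists (h.2 q); split=> [x|p]; first by rewrite gmul_x h_x gpow_x ymon_x mulr0 addr0 eqxx.
  rewrite gmul_y h_x mul0r addr0 gpow_y yq_y !ymon_x !(mul0r, mulr0) addr0.
  have [->|p_neq_q] := eqVneq p q; first by rewrite mulr1 subrr eqxx.
  rewrite mulr0 addr0 => /h_i.2 le_ip; rewrite ltn_neqAle le_ip andbT.
  apply: contra p_neq_q => /eqP def_i; apply/eqP/enum_rank_inj/val_inj.
  by rewrite /= rank_q def_i addKn.
- move=> k k_neq0 [_ yq_k]; have := yq_k q.
  rewrite gpow_y yq_y !ymon_x !(mul0r, mulr0) addr0 eqxx mulr1 rank_q subnKC //.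
  by rewrite ltnn => /(_ k_neq0).
Qed.

Lemma support_series_step i : (i < #|D| + N)%N ->
  exists g, infinite_cyclic_step (support_series i.+1) (support_series i) g.
Proof.
move=> lt_iN; have [lt_iD|Di] := ltnP i #|D|; first exact: support_series_step_x.
by apply: support_series_step_y; rewrite Di.
Qed.

Lemma support_series_cyclic : cyclic_series supported (#|D| + N) support_series.
Proof.
split=> [h|h|i _|i _|i /support_series_step [g [Hg gen_g _]]]; last by exists g.
- exact: support_series0.
- exact: support_series_last.
- exact: support_series_subgroup.
- exact: support_series_normal.
Qed.

Lemma hrank_supported : hrank supported = (#|D| + N)%N.
Proof.
have [I cardI infI] := hrank_cyclic_series support_series_cyclic.
rewrite -cardI; suff -> : I = setT by rewrite cardsT card_ord.
apply/setP => i; rewrite inE; apply/infI.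
have [g [Hg _ not_torsion]] := support_series_step (ltn_ord i).
move/(finite_quotient_torsion (support_series_subgroup _) (support_series_subgroup _) Hg).
by case=> j /not_torsion.
Qed.

Lemma hirsch_supported : hirsch_number supported (#|D| + N).
Proof.
split; first by exists (#|D| + N)%N, support_series; apply: support_series_cyclic.
by move=> m s /hrank_cyclic_series; rewrite hrank_supported.
Qed.

End SupportSeries.

Lemma gmulC_cocycle n (e : rel 'I_n) (a b : GG e) : gmul a b = gmul b a <->
  forall p : Pairs e, a.1 (val p).2 * b.1 (val p).1 = b.1 (val p).2 * a.1 (val p).1.
Proof.
split=> [ab p | cocycle]; last by apply: GG_ext => [i|p]; rewrite !ggE ?cocycle; ring.
by have := congr1 (fun c : GG e => c.2 p) ab; rewrite !gmul_y (addrC (b.2 p)) => /addrI.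
Qed.

Lemma centralizer_gen_elt n (e : rel 'I_n) (e_sym : symmetric e) i0 z0 t (h : GG e) :
  z0 != 0 -> centralizer (gen_elt i0 z0 t) h <-> supported (i0 |: [set j | e i0 j]) h.
Proof.
move=> z0_neq0; rewrite /centralizer gmulC_cocycle.
have g_x x : (gen_elt i0 z0 t).1 x = if x == i0 then z0 else 0 by rewrite ffunE.
split=> [comm j | h_D [[x y] /= /andP [/= lt_xy xNy]]]; last first.
  rewrite !g_x; have [x_i0|x_neq_i0] := eqVneq x i0.
    have y_neq_i0 : y != i0 by apply: contraTneq lt_xy => ->; rewrite x_i0 ltnn.
    by rewrite (negbTE y_neq_i0) (h_D y) ?mulr0 ?mul0r // !inE negb_or y_neq_i0 -x_i0.
  have [y_i0|_] := eqVneq y i0; last by rewrite mulr0 mul0r.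
  by rewrite (h_D x) ?mulr0 // !inE negb_or x_neq_i0 e_sym -y_i0.
rewrite !inE negb_or => /andP [j_neq_i0 i0Nj].
have [lt_i0j|lt_ji0|/val_inj eq_i0j] := ltngtP i0 j; last by rewrite eq_i0j eqxx in j_neq_i0.
  have nonedge_i0j : nonedge e (i0, j) by rewrite /nonedge /= lt_i0j i0Nj.
  have := comm (exist _ (i0, j) nonedge_i0j); rewrite /= !g_x eqxx (negbTE j_neq_i0) mul0r.
  by move/eqP; rewrite mulf_eq0 (negbTE z0_neq0) orbF => /eqP.
have nonedge_ji0 : nonedge e (j, i0) by rewrite /nonedge /= lt_ji0 e_sym i0Nj.
have := comm (exist _ (j, i0) nonedge_ji0); rewrite /= !g_x eqxx (negbTE j_neq_i0) mulr0.
by move/esym/eqP; rewrite mulf_eq0 (negbTE z0_neq0) => /eqP.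
Qed.

Theorem lemma4p1 (n : nat) (e : rel 'I_n) (e_sym : symmetric e)
    (e_irr : irreflexive e) (i0 : 'I_n) (z0 : int) (t : {ffun Pairs e -> int})
    (hz0 : z0 != 0%R) :
  @hirsch_number n e (@centralizer n e (@gen_elt n e i0 z0 t))
    (#|[set j | e i0 j]| + #|{: Pairs e}| + 1)%N.
Proof.
have -> : centralizer (gen_elt i0 z0 t) = supported (i0 |: [set j | e i0 j]).
  by apply/funext => h; apply/propext; apply: centralizer_gen_elt.
have -> : (#|[set j | e i0 j]| + #|{: Pairs e}| + 1 = #|i0 |: [set j | e i0 j]| + #|{: Pairs e}|)%N.
  by rewrite cardsU1 inE e_irr add1n addSn addn1.
exact: hirsch_supported.
Qed.
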